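(* Coefficientwise in $\mathbb{Z}[\![t]\!]$ the following congruences hold: \begin{align*} U(t) &\equiv (1+20t+10t^{2}) U(t^{5}) \pmod{5^{2}} ,\\ V(t) &\equiv (1+15t +5t^{2}) U(t^{5}) \pmod{5^{2}} ,\\ U(t) &\equiv \frac{ 1+22 t+7 t^{2}+21 t^{3} +t^{7} +36t^{8} }{ 1+t^{7} }\, U(t^{7}) \pmod{7^{2}} ,\\ V(t) &\equiv \frac{ 1+7 t+42 t^{2}+7 t^{3} +43 t^{7} }{ 1+t^{7} }\, U(t^{7}) \pmod{7^{2}} . \end{align*}
   Context: For $r\ge0$ let $u_{r} = \frac{(6r)!}{(3r)!\, r!^{3}}$, $U(t)=\sum_{r\ge0}u_rt^r={}_3F_2(\tfrac16,\tfrac12,\tfrac56;1,1;1728t)$ and $V(t)=\sum_{r\ge0}(6r+1)u_rt^r$. Division by $1+t^7$ is taken in $\mathbb{Z}[\![t]\!]$; a congruence modulo $N$ of power series means all coefficients of the difference are divisible by $N$. *)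

From mathcomp Require Import all_boot all_order all_algebra.
Set Implicit Arguments. Unset Strict Implicit. Unset Printing Implicit Defensive.
Import GRing.Theory Num.Theory.
Local Open Scope ring_scope.

(* Formal power series in Z[[t]] represented by their coefficient sequences. *)
Definition series := nat -> int.

(* u_r = (6r)! / ((3r)! r!^3)  (an integer; the division is exact). *)
Definition u (r : nat) : int :=
  (((6 * r)`! %/ ((3 * r)`! * (r`! ^ 3)))%N)%:Z.

Definition U : series := fun r => u r.
Definition V : series := fun r => ((6 * r + 1)%N)%:Z * u r.

(* f(t^k) *)
Definition subst_pow (k : nat) (f : series) : series :=
  fun n => if (k %| n)%N then f (n %/ k)%N else 0.

(* polynomial with coefficient list s (constant term first) *)
Definition polyS (s : seq int) : series := fun n => nth 0 s n.

Definition smul (f g : series) : series :=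
  fun n => \sum_(i < n.+1) f i * g (n - i)%N.

(* 1/(1+t^7) = sum_k (-1)^k t^(7k) in Z[[t]] *)
Definition inv_1pt7 : series :=
  fun n => if (7 %| n)%N then (-1) ^+ (n %/ 7)%N else 0.

Definition sdiv_1pt7 (f : series) : series := smul f inv_1pt7.

Definition scong (N : int) (f g : series) : Prop :=
  forall n : nat, (N %| (f n - g n))%Z.

(* The recurrence (r + 1)^3 u_(r+1) = 24 (6r + 1)(2r + 1)(6r + 5) u_r has, for
   r = pm + j, coefficients whose residues mod p^2 depend on m only through m mod p,
   and (r + 1)^3 is invertible mod p for j < p - 1.  Iterating it from the Babbage-type
   congruence u_(pm) = u_m mod p^2, itself a consequence of
   (pN)! = p^N N! prod_(k<N) prod_(0<l<p) (pk + l) and prod_(0<l<p) (pk + l) = (p - 1)!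
   mod p^2, gives u_(pm+j) = c_p(m mod p, j) u_m mod p^2 with explicit residues c_p.
   Expanding u_m once more in the same way, each of the four congruences reduces to
   finitely many identities between the c_p in Z/p^2, checked by computation.  For
   p = 7 the division by 1 + t^7 brings in the alternating sums
   W_m = sum_(k<=m) (-1)^(m-k) u_k; they only matter modulo 7, where W_m = (1 - m) u_m. *)

From mathcomp Require Import all_boot all_order all_algebra.
From mathcomp Require Import zify ring.
Set Implicit Arguments. Unset Strict Implicit. Unset Printing Implicit Defensive.
Import GRing.Theory.
Local Open Scope ring_scope.

(* A bounded quantifier that [vm_compute] evaluates, unlike [forall i : 'I_n, _]. *)
Definition all_below (n : nat) (P : pred nat) : bool := all P (iota 0 n).

Lemma all_belowP n (P : pred nat) : all_below n P -> forall i, (i < n)%N -> P i.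
Proof. by move=> /allP hP i lt_in; apply: hP; rewrite mem_iota. Qed.

Lemma fact_addn a k : ((a + k)`! = a`! * \prod_(1 <= l < k.+1) (a + l))%N.
Proof.
elim: k => [|k IH]; first by rewrite addn0 big_geq // muln1.
by rewrite addnS factS IH [in RHS]big_nat_recr //= addnS mulnC mulnA.
Qed.

Lemma fact_mul_dvd a b : (a`! * b`! %| (a + b)`!)%N.
Proof. by rewrite -(bin_fact (leq_addr b a)) addKn dvdn_mull. Qed.

Lemma u_denom_dvd r : ((3 * r)`! * r`! ^ 3 %| (6 * r)`!)%N.
Proof.
have fact3 : (r`! ^ 3 %| (3 * r)`!)%N.
  rewrite (_ : 3 * r = r + (r + r))%N; last lia.
  rewrite (_ : r`! ^ 3 = r`! * (r`! * r`!))%N; last by rewrite !expnS expn0 muln1.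
  exact: dvdn_trans (dvdn_mul (dvdnn _) (fact_mul_dvd r r)) (fact_mul_dvd _ _).
rewrite (_ : 6 * r = 3 * r + 3 * r)%N; last lia.
exact: dvdn_trans (dvdn_mul (dvdnn _) fact3) (fact_mul_dvd _ _).
Qed.

Lemma u_fact r : u r * ((3 * r)`! * r`! ^ 3)%:Z = ((6 * r)`!)%:Z.
Proof. by rewrite /u -PoszM divnK // u_denom_dvd. Qed.

Definition rec_num (R : pzSemiRingType) (x : R) : R :=
  24 * (6 * x + 1) * (2 * x + 1) * (6 * x + 5).
Definition rec_den (R : pzSemiRingType) (x : R) : R := (x + 1) ^+ 3.

Lemma u_rec_int r : u r.+1 * rec_den (r%:R : int) = rec_num r%:R * u r.
Proof.
rewrite natz.
have := u_fact r.+1.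
rewrite (_ : 6 * r.+1 = 6 * r + 6)%N; last lia.
rewrite (_ : 3 * r.+1 = 3 * r + 3)%N; last lia.
rewrite (fact_addn (3 * r) 3) (fact_addn (6 * r) 6) factS unlock /= !muln1.
rewrite -!natz !(natrM, natrX, natrD) !natz -(u_fact r) PoszM.
rewrite -[Posz (r`! ^ 3)]natz natrX natz intS.
set K3 := Posz _`!; set K1 := Posz _`!; set x := Posz r => /eqP.
rewrite -subr_eq0 => /eqP e1.
have P3_neq0 : K3 * K1 ^+ 3 * ((3 * x + 1) * (3 * x + 2) * (3 * x + 3)) != 0.
  have fact_neq0 n : Posz n`! != 0 by rewrite eqz_nat -lt0n fact_gt0.
  rewrite !mulf_neq0 ?expf_neq0 ?fact_neq0 // /x; lia.
apply: (mulIf P3_neq0); apply/eqP; rewrite -subr_eq0 -e1 /rec_den /rec_num.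
apply/eqP; ring.
Qed.

Lemma u_rec (R : pzRingType) r :
  (u r.+1)%:~R * rec_den (r%:R : R) = rec_num r%:R * (u r)%:~R.
Proof.
have := congr1 (intr : int -> R) (u_rec_int r).
by rewrite /rec_den /rec_num !(rmorphM, rmorphD, rmorphXn, rmorph_nat, rmorph1).
Qed.

Definition block (p k : nat) : nat := \prod_(1 <= l < p) (p * k + l).

Definition block_prod (p N : nat) : nat := \prod_(k < N) block p k.

Lemma fact_pmul p N : (0 < p)%N -> ((p * N)`! = p ^ N * N`! * block_prod p N)%N.
Proof.
move=> p_gt0; elim: N => [|N IH]; first by rewrite muln0 /block_prod big_ord0.
rewrite mulnS addnC fact_addn IH big_nat_recr //= /block_prod big_ord_recr /=.
rewrite expnS factS (_ : p * N + p = p * N.+1)%N ?mulnS 1?addnC //; ring.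
Qed.

Lemma u_pmul_block_prod p m : (0 < p)%N ->
  u (p * m) * (block_prod p (3 * m) * block_prod p m ^ 3)%:Z =
  u m * (block_prod p (6 * m))%:Z.
Proof.
move=> p_gt0; have := u_fact (p * m).
rewrite (_ : 3 * (p * m) = p * (3 * m))%N; last lia.
rewrite (_ : 6 * (p * m) = p * (6 * m))%N; last lia.
have pXm k : (p ^ (k * m) = (p ^ m) ^ k)%N by rewrite mulnC expnM.
rewrite !(@fact_pmul p) // !pXm.
have P_gt0 : (0 < p ^ m)%N by rewrite expn_gt0 p_gt0.
set P := (p ^ m)%N in P_gt0 *; clearbody P.
rewrite -!natz !(natrM, natrX) !natz -(u_fact m) PoszM.
rewrite -[Posz (m`! ^ 3)]natz natrX natz.
set K3 := Posz _`!; set K1 := Posz m`! => /eqP.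
rewrite -subr_eq0 => /eqP e1.
have X_neq0 : P%:Z ^+ 6 * K3 * K1 ^+ 3 != 0.
  by rewrite !mulf_neq0 ?expf_neq0 // eqz_nat -lt0n ?fact_gt0.
apply: (mulIf X_neq0); apply/eqP; rewrite -subr_eq0 -e1.
apply/eqP; ring.
Qed.

Lemma sum_dvdn_cond p (h : nat -> int) n : (0 < p)%N ->
  \sum_(i < n.+1) (if (p %| i)%N then h i else 0) = \sum_(k < (n %/ p).+1) h (p * k)%N.
Proof.
move=> p_gt0; elim: n => [|n IH]; first by rewrite div0n !big_ord_recr !big_ord0 /= dvdn0 muln0.
rewrite big_ord_recr /= IH divnS //.
case: ifP => p_dvd /=; last by rewrite addr0.
rewrite add1n [in RHS]big_ord_recr /=; congr (_ + h _).
by rewrite -{1}(divnK p_dvd) divnS // p_dvd mulnC.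
Qed.

Lemma smul_subst_pow p f g n : (0 < p)%N ->
  smul f (subst_pow p g) n = \sum_(k < (n %/ p).+1) f (n - p * k)%N * g k.
Proof.
move=> p_gt0; rewrite /smul (reindex_inj rev_ord_inj) /=.
transitivity (\sum_(i < n.+1) (if (p %| i)%N then f (n - i)%N * g (i %/ p)%N else 0)).
  apply: eq_bigr => i _; rewrite /subst_pow subSS subKn; last by rewrite -ltnS.
  by case: ifP => _; rewrite ?mulr0.
apply: eq_trans (sum_dvdn_cond (fun i => f (n - i)%N * g (i %/ p)%N) n p_gt0) _.
by apply: eq_bigr => k _; rewrite mulKn.
Qed.

Lemma divn_mulnD p m j : (j < p)%N -> ((p * m + j) %/ p = m)%N.
Proof. by move=> lt_jp; rewrite mulnC divnMDl ?divn_small ?addn0 // (leq_ltn_trans _ lt_jp). Qed.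

Lemma smul_polyS_subst_pow p s g m j : (j < p)%N -> (size s <= p)%N ->
  smul (polyS s) (subst_pow p g) (p * m + j)%N = s`_j * g m.
Proof.
move=> lt_jp size_s; rewrite smul_subst_pow ?(leq_ltn_trans _ lt_jp) // divn_mulnD //.
rewrite big_ord_recr /= big1 ?add0r ?addKn // => -[k lt_km] _ /=.
rewrite /polyS nth_default ?mul0r //; apply: (leq_trans size_s); nia.
Qed.

Lemma sdiv_1pt7_polyS s q j : (j < 7)%N -> (size s <= 14)%N ->
  sdiv_1pt7 (polyS s) (7 * q + j)%N =
  (-1) ^+ q * (s`_j - s`_(7 + j)) + (q == 0)%:R * s`_(7 + j).
Proof.
move=> lt_j7 size_s.
rewrite /sdiv_1pt7 (_ : inv_1pt7 = subst_pow 7 (fun k => (-1) ^+ k)) //.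
rewrite smul_subst_pow // divn_mulnD // /polyS.
case: q => [|q]; first by rewrite big_ord_recr big_ord0 /= !muln0 !subn0 add0n; ring.
rewrite !big_ord_recr /= big1 ?add0r => [|[k lt_kq] _ /=]; last first.
  by rewrite nth_default ?mul0r //; apply: (leq_trans size_s); nia.
rewrite (_ : 7 * q.+1 + j - 7 * q.+1 = j)%N; last lia.
rewrite (_ : 7 * q.+1 + j - 7 * q = 7 + j)%N; last lia.
rewrite exprS; ring.
Qed.

Definition u_altsum (m : nat) : int := \sum_(k < m.+1) (-1) ^+ (m - k) * u k.

Lemma u_altsumS m : u_altsum m.+1 = u m.+1 - u_altsum m.
Proof.
rewrite /u_altsum big_ord_recr /= subnn expr0 mul1r addrC -sumrN; congr (_ + _).
by apply: eq_bigr => -[k lt_km] _ /=; rewrite subSn // exprS mulN1r mulNr.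
Qed.

Lemma smul_sdiv_1pt7_subst_pow s m j : (j < 7)%N -> (size s <= 14)%N ->
  smul (sdiv_1pt7 (polyS s)) (subst_pow 7 U) (7 * m + j)%N =
  (s`_j - s`_(7 + j)) * u_altsum m + s`_(7 + j) * u m.
Proof.
move=> lt_j7 size_s; rewrite smul_subst_pow // divn_mulnD //.
transitivity (\sum_(k < m.+1) ((s`_j - s`_(7 + j)) * ((-1) ^+ (m - k) * u k)
                               + (m - k == 0)%N%:R * s`_(7 + j) * u k)).
  apply: eq_bigr => -[k lt_km] _ /=.
  rewrite (_ : 7 * m + j - 7 * k = 7 * (m - k) + j)%N; last lia.
  by rewrite sdiv_1pt7_polyS // /U mulrDl (mulrC ((-1) ^+ _)) !mulrA.
rewrite big_split /= -mulr_sumr; congr (_ + _).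
rewrite big_ord_recr /= subnn mul1r big1 ?add0r // => -[k lt_km] _ /=.
by rewrite subn_eq0 leqNgt lt_km mul0r.
Qed.

Lemma Zp_intr_eq0 d z : (1 < d)%N -> ((z%:~R : 'Z_d) == 0) = (d%:Z %| z)%Z.
Proof.
move=> d_gt1.
have natr_eq0 n : ((n%:R : 'Z_d) == 0) = (d %| n)%N by rewrite -val_eqE /= val_Zp_nat.
by case: z => n; rewrite dvdzE /= ?oppr_eq0 natr_eq0.
Qed.

Lemma scong_Zp d f g :
  (1 < d)%N -> (forall n, (f n)%:~R = (g n)%:~R :> 'Z_d) -> scong d%:Z f g.
Proof. by move=> d_gt1 fg n; rewrite -Zp_intr_eq0 // rmorphB /= fg subrr. Qed.

(* True for every odd prime p, but only checked, by computation, for p = 5 and 7. *)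
Definition block_const_mod_p2 (p : nat) : bool :=
  all_below p (fun k =>
    \prod_(1 <= l < p) ((p * k + l)%:R : 'Z_(p ^ 2)) == \prod_(1 <= l < p) l%:R).

Section Lucas.

Variable p : nat.
Hypothesis p_prime : prime p.
Local Notation R := 'Z_(p ^ 2).

Lemma p2_gt1 : (1 < p ^ 2)%N.
Proof. by rewrite (@ltn_trans 2) // ltn_expl // prime_gt1. Qed.

Lemma ltn_modp n : (n %% p < p)%N.
Proof. by rewrite ltn_pmod // prime_gt0. Qed.

Lemma Zp2_natp_sqr : p%:R * p%:R = 0 :> R.
Proof. by rewrite -natrM mulnn pchar_Zp // p2_gt1. Qed.

Lemma Zp2_natp_shift q j : p%:R * (p * q + j)%:R = p%:R * j%:R :> R.
Proof. by rewrite natrD natrM mulrDr mulrA Zp2_natp_sqr mul0r add0r. Qed.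

Lemma Zp2_natp_mod n : p%:R * n%:R = p%:R * (n %% p)%:R :> R.
Proof. by rewrite {1}(divn_eq n p) mulnC Zp2_natp_shift. Qed.

Lemma Zp2_natpD_mod m j : (p * m + j)%:R = (p * (m %% p) + j)%:R :> R.
Proof. by rewrite !natrD !natrM Zp2_natp_mod. Qed.

Lemma Zp2_nat_unit n : ~~ (p %| n)%N -> (n%:R : R) \is a GRing.unit.
Proof. by move=> p_ndvd; rewrite unitZpE ?p2_gt1 // coprime_pexpl // prime_coprime. Qed.

(* The residue c_p(m0, j); the nat range, rather than 'I_j, keeps it computable. *)
Definition lucas_coef (m0 j : nat) : R :=
  \prod_(0 <= i < j) (rec_num (p * m0 + i)%:R / rec_den (p * m0 + i)%:R).

Hypothesis block_const : block_const_mod_p2 p.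

Let c : R := \prod_(1 <= l < p) l%:R.

Lemma c_unit : c \is a GRing.unit.
Proof.
rewrite /c unitr_prod_in // => l; rewrite mem_index_iota => /andP[l_gt0 l_lt_p].
by rewrite Zp2_nat_unit // gtnNdvd.
Qed.

Lemma block_Zp k : (block p k)%:R = c :> R.
Proof.
rewrite /c -(eqP (all_belowP block_const (ltn_modp k))) natr_prod.
by apply: eq_bigr => l _; rewrite /= !natrD !natrM Zp2_natp_mod.
Qed.

Lemma block_prod_Zp N : (block_prod p N)%:R = c ^+ N :> R.
Proof.
rewrite natr_prod (eq_bigr (fun=> c)) ?prodr_const ?card_ord // => k _.
exact: block_Zp.
Qed.

Lemma u_babbage m : (u (p * m)%N)%:~R = (u m)%:~R :> R.
Proof.
have := congr1 (intr : int -> R) (u_pmul_block_prod m (prime_gt0 p_prime)).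
rewrite !rmorphM /= -!(pmulrn _ (block_prod _ _)) !block_prod_Zp -!exprD.
rewrite (_ : 3 * m + (m + (m + m)) = 6 * m)%N; last lia.
apply: (mulIr (@unitrX _ c _ c_unit)).
Qed.

Lemma rec_den_unit m0 j : (j.+1 < p)%N -> rec_den ((p * m0 + j)%:R : R) \is a GRing.unit.
Proof.
move=> lt_jp; rewrite unitrX // natr1 Zp2_nat_unit // -addnS.
by rewrite dvdn_addr ?dvdn_mulr // gtnNdvd.
Qed.

Lemma u_lucas m j : (j < p)%N ->
  (u (p * m + j)%N)%:~R = lucas_coef (m %% p) j * (u m)%:~R :> R.
Proof.
elim: j => [|j IH] lt_jp; first by rewrite addn0 /lucas_coef big_geq // mul1r u_babbage.
have := u_rec R (p * m + j).
rewrite addnS Zp2_natpD_mod IH 1?ltnW // => rec.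
rewrite -[LHS](mulrK (rec_den_unit (m %% p) lt_jp)) rec /lucas_coef big_nat_recr //=.
ring.
Qed.

Lemma V_lucas m j : (j < p)%N ->
  (V (p * m + j)%N)%:~R =
  (6 * (p * (m %% p) + j) + 1)%N%:R * lucas_coef (m %% p) j * (u m)%:~R :> R.
Proof.
move=> lt_jp; rewrite /V rmorphM /= -pmulrn u_lucas // mulrA.
congr (_ * _ * _).
by rewrite [LHS]natrD [RHS]natrD [in LHS]natrM [in RHS]natrM [in LHS]Zp2_natpD_mod.
Qed.

Lemma lucas_annihilator (a : nat -> R) m :
  all_below p (fun m0 => all_below p (fun q0 => a m0 * lucas_coef q0 m0 == 0)) ->
  a (m %% p)%N * (u m)%:~R = 0.
Proof.
move=> ann; rewrite {2}(divn_eq m p) mulnC u_lucas ?ltn_modp // mulrA.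
by rewrite (eqP (all_belowP (all_belowP ann (ltn_modp m)) (ltn_modp _))) mul0r.
Qed.

Lemma scong_lucas_polyS (f : series) (lambda : nat -> nat -> R) s :
  (size s <= p)%N ->
  (forall m j, (j < p)%N -> (f (p * m + j)%N)%:~R = lambda (m %% p)%N j * (u m)%:~R) ->
  all_below p (fun j => all_below p (fun m0 => all_below p (fun q0 =>
    (lambda m0 j - (s`_j)%:~R) * lucas_coef q0 m0 == 0))) ->
  scong (p ^ 2)%:Z f (smul (polyS s) (subst_pow p U)).
Proof.
move=> size_s f_lucas ann; apply: scong_Zp p2_gt1 _ => n.
rewrite (divn_eq n p) mulnC smul_polyS_subst_pow ?ltn_modp // f_lucas ?ltn_modp // rmorphM /=.
apply/eqP; rewrite -subr_eq0 -mulrBl; apply/eqP.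
exact: (lucas_annihilator _ (all_belowP ann (ltn_modp n))).
Qed.

End Lucas.

Lemma prime5 : prime 5. Proof. by []. Qed.
Lemma prime7 : prime 7. Proof. by []. Qed.

Lemma block_const5 : block_const_mod_p2 5.
Proof. by rewrite /block_const_mod_p2 unlock; vm_compute. Qed.

Lemma block_const7 : block_const_mod_p2 7.
Proof. by rewrite /block_const_mod_p2 unlock; vm_compute. Qed.

Local Notation R7 := 'Z_(7 ^ 2).

Lemma u_mod7_step m :
  7%:R * ((m.+1)%:R * (u m.+1)%:~R + (m%:R - 1) * (u m)%:~R) = 0 :> R7.
Proof.
have lt7 n : (n %% 7 < 7)%N by rewrite ltn_pmod.
have ann : all_below 7 (fun m0 => all_below 7 (fun q0 =>
    7%:R * (m0.+1%:R * lucas_coef 7 q0 m0.+1 + (m0%:R - 1) * lucas_coef 7 q0 m0) == 0 :> R7)).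
  by rewrite /lucas_coef unlock; vm_compute.
have [q [m0 [lt_m0 ->]]] : exists q m0, (m0 < 7)%N /\ m = (7 * q + m0)%N.
  by exists (m %/ 7)%N, (m %% 7)%N; rewrite mulnC -divn_eq lt7.
have lucas7 := u_lucas prime7 block_const7.
have shift7 := Zp2_natp_shift prime7.
have next_term : 7%:R * ((7 * q + m0).+1%:R * (u (7 * q + m0).+1)%:~R) =
                 7%:R * m0.+1%:R * lucas_coef 7 (q %% 7) m0.+1 * (u q)%:~R :> R7.
  have [lt_m06 | ge_m06] := ltnP m0 6.
    by rewrite -addnS lucas7 // mulrA shift7 -!mulrA.
  (* For m0 = 6 both sides vanish: 7 divides m + 1, and 7 * 7 = 0. *)
  have -> : m0 = 6 by lia.
  rewrite (_ : (7 * q + 6).+1 = 7 * q.+1 + 0)%N; last lia.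
  by rewrite mulrA shift7 (Zp2_natp_sqr prime7) !mul0r mulr0 mul0r.
rewrite mulrDr next_term lucas7 // mulrA mulrBr shift7 -mulrBr.
by rewrite mulrA -mulrDl -!mulrA -mulrDr (eqP (all_belowP (all_belowP ann lt_m0) (lt7 q))) mul0r.
Qed.

Lemma u_altsum_mod7 m :
  7%:R * (u_altsum m)%:~R = 7%:R * (1 - m%:R) * (u m)%:~R :> R7.
Proof.
elim: m => [|m IH]; first by rewrite /u_altsum big_ord1 subnn expr0 mul1r subr0 -mulrA mul1r.
rewrite u_altsumS rmorphB mulrBr IH; apply/eqP; rewrite -subr_eq0 -(u_mod7_step m) -natr1.
apply/eqP; ring.
Qed.

Lemma u_altsum_Zp a m : (7 %| a)%Z ->
  a%:~R * (u_altsum m)%:~R = a%:~R * (1 - (m %% 7)%N%:R) * (u m)%:~R :> R7.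
Proof.
case/dvdzP=> b ->; rewrite rmorphM /= -!mulrA u_altsum_mod7 !mulrA -!(mulrA _ 7%:R).
by rewrite !mulrBr (Zp2_natp_mod prime7 m).
Qed.

Lemma scong_lucas_sdiv_1pt7 (f : series) (lambda : nat -> nat -> R7) s :
  (size s <= 14)%N ->
  (forall m j, (j < 7)%N -> (f (7 * m + j)%N)%:~R = lambda (m %% 7)%N j * (u m)%:~R) ->
  all_below 7 (fun j => (7 %| s`_j - s`_(7 + j))%Z) ->
  all_below 7 (fun j => all_below 7 (fun m0 => all_below 7 (fun q0 =>
    (lambda m0 j - ((s`_j - s`_(7 + j))%:~R * (1 - m0%:R) + (s`_(7 + j))%:~R))
      * lucas_coef 7 q0 m0 == 0))) ->
  scong (7 ^ 2)%:Z f (smul (sdiv_1pt7 (polyS s)) (subst_pow 7 U)).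
Proof.
move=> size_s f_lucas s_dvd ann; apply: scong_Zp => // n.
have lt_n7 : (n %% 7 < 7)%N by rewrite ltn_pmod.
rewrite (divn_eq n 7) mulnC smul_sdiv_1pt7_subst_pow // f_lucas // rmorphD !rmorphM /=.
rewrite u_altsum_Zp ?(all_belowP s_dvd) // -mulrDl.
apply/eqP; rewrite -subr_eq0 -mulrBl; apply/eqP.
exact: (lucas_annihilator prime7 block_const7 _ (all_belowP ann lt_n7)).
Qed.

Theorem proposition3p4 :
  [/\ scong (5 ^+ 2) U (smul (polyS [:: 1; 20; 10]) (subst_pow 5 U)),
      scong (5 ^+ 2) V (smul (polyS [:: 1; 15; 5]) (subst_pow 5 U)),
      scong (7 ^+ 2) U
        (smul (sdiv_1pt7 (polyS [:: 1; 22; 7; 21; 0; 0; 0; 1; 36])) (subst_pow 7 U))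
    & scong (7 ^+ 2) V
        (smul (sdiv_1pt7 (polyS [:: 1; 7; 42; 7; 0; 0; 0; 43])) (subst_pow 7 U))].
Proof.
split.
- apply: (scong_lucas_polyS prime5 block_const5 _ (u_lucas prime5 block_const5)); first by [].
  by rewrite /lucas_coef unlock; vm_compute.
- apply: (scong_lucas_polyS prime5 block_const5 _ (V_lucas prime5 block_const5)
            (lambda := fun m0 j => (6 * (5 * m0 + j) + 1)%N%:R * lucas_coef 5 m0 j)); first by [].
  by rewrite /lucas_coef unlock; vm_compute.
- apply: (scong_lucas_sdiv_1pt7 _ (u_lucas prime7 block_const7)); first by [].
    by vm_compute.
  by rewrite /lucas_coef unlock; vm_compute.
- apply: (scong_lucas_sdiv_1pt7 _ (V_lucas prime7 block_const7)
            (lambda := fun m0 j => (6 * (7 * m0 + j) + 1)%N%:R * lucas_coef 7 m0 j)); first by [].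
    by vm_compute.
  by rewrite /lucas_coef unlock; vm_compute.
Qed.
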